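(* Let $A$ be a partial ring. A partial subring $R\subseteq A\times A$ is a congruence on $A$ if and only if its underlying partial monoid is an effective equivalence relation on the underlying partial monoid of $A$.
   Context: A partial monoid is a set $A$ with $0$, a set $A_2\subseteq A\times A$ of summable pairs and $+\colon A_2\to A$, with $0$ a unit summable with everything, commutativity ($(a,b)\in A_2\Rightarrow(b,a)\in A_2$, $a+b=b+a$), and associativity: $(a,b),(a+b,c)\in A_2$ iff $(b,c),(a,b+c)\in A_2$, and then $(a+b)+c=a+(b+c)$. A partial ring is a partial monoid with a commutative associative multiplication with unit $1$ such that $0\cdot a=0$ and $(a_1,a_2)\in A_2\Rightarrow(a_1x,a_2x)\in A_2$, $(a_1+a_2)x=a_1x+a_2x$. Homomorphisms preserve $0$ (and $1$, products for rings), summability and sums. $A\times A$ is the product partial ring (componentwise operations, pairs summable iff componentwise summable). An equivalence relation on a partial monoid (resp. partial ring) $A$ is a partial submonoid (resp. partial subring) $R\subseteq A\times A$ such that for each object $X$ of the category, $\mathrm{Hom}(X,R)$ is an equivalence relation on $\mathrm{Hom}(X,A)$; it is effective if it is the kernel pair of some homomorphism $f\colon A\to B$ in that category, i.e. $R=\{(a,a'):f(a)=f(a')\}$ with summable pairs all pairs of elements of $R$ summable in $A\times A$. A congruence on a partial ring $A$ is an effective equivalence relation on $A$ in the category of partial rings. *)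

(* The partial addition + : A_2 -> A is modelled by a total function [padd]
   whose values outside the summable pairs [psumm] are irrelevant. *)
Record PMon := {
  car :> Type;
  pzero : car;
  psumm : car -> car -> Prop;
  padd : car -> car -> car;
  pzero_summ : forall a, psumm pzero a;
  pzero_add : forall a, padd pzero a = a;
  psumm_comm : forall a b, psumm a b -> psumm b a;
  padd_comm : forall a b, psumm a b -> padd a b = padd b a;
  psumm_assoc : forall a b c,
    (psumm a b /\ psumm (padd a b) c) <-> (psumm b c /\ psumm a (padd b c));
  padd_assoc : forall a b c, psumm a b -> psumm (padd a b) c ->
    padd (padd a b) c = padd a (padd b c)
}.
Arguments pzero {p}.
Arguments psumm {p}.
Arguments padd {p}.

Record PRing := {
  pm :> PMon;
  pone : pm;
  pmul : pm -> pm -> pm;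
  pmul_comm : forall a b, pmul a b = pmul b a;
  pmul_assoc : forall a b c, pmul (pmul a b) c = pmul a (pmul b c);
  pone_mul : forall a, pmul pone a = a;
  pzero_mul : forall a, pmul pzero a = pzero;
  psumm_mul : forall a1 a2 x, psumm a1 a2 -> psumm (pmul a1 x) (pmul a2 x);
  pmul_addl : forall a1 a2 x, psumm a1 a2 ->
    pmul (padd a1 a2) x = padd (pmul a1 x) (pmul a2 x)
}.
Arguments pone {p}.
Arguments pmul {p}.

Definition is_pmon_hom (A B : PMon) (f : A -> B) : Prop :=
  f pzero = pzero /\
  (forall a b, psumm a b -> psumm (f a) (f b) /\ f (padd a b) = padd (f a) (f b)).

Definition is_pring_hom (A B : PRing) (f : A -> B) : Prop :=
  is_pmon_hom (pm A) (pm B) f /\ f pone = pone /\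
  (forall a b, f (pmul a b) = pmul (f a) (f b)).

Section Prod.
Variable A : PMon.

Definition prod_summ (p q : A * A) : Prop := psumm (fst p) (fst q) /\ psumm (snd p) (snd q).
Definition prod_add (p q : A * A) : A * A := (padd (fst p) (fst q), padd (snd p) (snd q)).

Lemma prod_zero_summ : forall a, prod_summ (pzero, pzero) a.
Proof. intros [a1 a2]; split; apply pzero_summ. Qed.

Lemma prod_zero_add : forall a, prod_add (pzero, pzero) a = a.
Proof. intros [a1 a2]; unfold prod_add; simpl; now rewrite !pzero_add. Qed.

Lemma prod_summ_comm : forall a b, prod_summ a b -> prod_summ b a.
Proof. intros a b [H1 H2]; split; now apply psumm_comm. Qed.

Lemma prod_add_comm : forall a b, prod_summ a b -> prod_add a b = prod_add b a.
Proof. intros a b [H1 H2]; unfold prod_add; now rewrite (padd_comm _ _ _ H1), (padd_comm _ _ _ H2). Qed.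

Lemma prod_summ_assoc : forall a b c,
  (prod_summ a b /\ prod_summ (prod_add a b) c) <->
  (prod_summ b c /\ prod_summ a (prod_add b c)).
Proof.
  intros a b c; unfold prod_summ, prod_add; simpl.
  pose proof (psumm_assoc A (fst a) (fst b) (fst c)) as E1.
  pose proof (psumm_assoc A (snd a) (snd b) (snd c)) as E2.
  tauto.
Qed.

Lemma prod_add_assoc : forall a b c, prod_summ a b -> prod_summ (prod_add a b) c ->
  prod_add (prod_add a b) c = prod_add a (prod_add b c).
Proof.
  intros a b c [H1 H2] [H3 H4]; unfold prod_add in *; simpl in *.
  now rewrite (padd_assoc _ _ _ _ H1 H3), (padd_assoc _ _ _ _ H2 H4).
Qed.

Definition prodPMon : PMon :=
  {| car := (A * A)%type; pzero := (pzero, pzero); psumm := prod_summ; padd := prod_add;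
     pzero_summ := prod_zero_summ; pzero_add := prod_zero_add;
     psumm_comm := prod_summ_comm; padd_comm := prod_add_comm;
     psumm_assoc := prod_summ_assoc; padd_assoc := prod_add_assoc |}.
End Prod.

Section ProdRing.
Variable A : PRing.

Definition prod_mul (p q : A * A) : A * A := (pmul (fst p) (fst q), pmul (snd p) (snd q)).

Lemma prod_mul_comm : forall a b : prodPMon A, prod_mul a b = prod_mul b a.
Proof. intros a b; unfold prod_mul; now rewrite (pmul_comm A (fst a)), (pmul_comm A (snd a)). Qed.

Lemma prod_mul_assoc : forall a b c : prodPMon A,
  prod_mul (prod_mul a b) c = prod_mul a (prod_mul b c).
Proof. intros a b c; unfold prod_mul; simpl; now rewrite !pmul_assoc. Qed.

Lemma prod_one_mul : forall a : prodPMon A, prod_mul (pone, pone) a = a.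
Proof. intros [a1 a2]; unfold prod_mul; simpl; now rewrite !pone_mul. Qed.

Lemma prod_zero_mul : forall a : prodPMon A, prod_mul (@pzero (prodPMon A)) a = @pzero (prodPMon A).
Proof. intros [a1 a2]; unfold prod_mul; simpl; now rewrite !pzero_mul. Qed.

Lemma prod_summ_mul : forall a1 a2 x : prodPMon A,
  @psumm (prodPMon A) a1 a2 -> @psumm (prodPMon A) (prod_mul a1 x) (prod_mul a2 x).
Proof. intros a1 a2 x [H1 H2]; split; simpl; now apply psumm_mul. Qed.

Lemma prod_mul_addl : forall a1 a2 x : prodPMon A, @psumm (prodPMon A) a1 a2 ->
  prod_mul (@padd (prodPMon A) a1 a2) x = @padd (prodPMon A) (prod_mul a1 x) (prod_mul a2 x).
Proof.
  intros a1 a2 x [H1 H2]; simpl; unfold prod_mul, prod_add; simpl.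
  now rewrite (pmul_addl _ _ _ _ H1), (pmul_addl _ _ _ _ H2).
Qed.

Definition prodPRing : PRing :=
  {| pm := prodPMon A; pone := (pone, pone); pmul := prod_mul;
     pmul_comm := prod_mul_comm; pmul_assoc := prod_mul_assoc;
     pone_mul := prod_one_mul; pzero_mul := prod_zero_mul;
     psumm_mul := prod_summ_mul; pmul_addl := prod_mul_addl |}.
End ProdRing.

Record PSubMon (M : PMon) := {
  sp : M -> Prop;
  ss : M -> M -> Prop;
  ss_sp : forall a b, ss a b -> sp a /\ sp b;
  ss_summ : forall a b, ss a b -> psumm a b;
  sp_zero : sp pzero;
  sp_add : forall a b, ss a b -> sp (padd a b);
  ss_zero : forall a, sp a -> ss pzero a;
  ss_comm : forall a b, ss a b -> ss b a;
  ss_assoc : forall a b c, sp a -> sp b -> sp c ->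
    ((ss a b /\ ss (padd a b) c) <-> (ss b c /\ ss a (padd b c)))
}.
Arguments sp {M}.
Arguments ss {M}.

Record PSubRing (A : PRing) := {
  psm :> PSubMon (pm A);
  sp_one : sp psm pone;
  sp_mul : forall a b, sp psm a -> sp psm b -> sp psm (pmul a b);
  ss_mul : forall a1 a2 x, ss psm a1 a2 -> sp psm x -> ss psm (pmul a1 x) (pmul a2 x)
}.
Arguments psm {A}.

(* For homs f g : X -> A, (f,g) lies in Hom(X,R) iff x |-> (f x, g x) factors
   through R as a homomorphism X -> R (R's operations being restrictions). *)
Definition hom_pair_in (X A : PMon) (R : PSubMon (prodPMon A)) (f g : X -> A) : Prop :=
  (forall x, sp R (f x, g x)) /\
  (forall x y, psumm x y -> ss R (f x, g x) (f y, g y)).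

Definition is_equiv_rel_PMon (A : PMon) (R : PSubMon (prodPMon A)) : Prop :=
  forall X : PMon,
    (forall f : X -> A, is_pmon_hom X A f -> hom_pair_in X A R f f) /\
    (forall f g : X -> A, is_pmon_hom X A f -> is_pmon_hom X A g ->
       hom_pair_in X A R f g -> hom_pair_in X A R g f) /\
    (forall f g h : X -> A, is_pmon_hom X A f -> is_pmon_hom X A g -> is_pmon_hom X A h ->
       hom_pair_in X A R f g -> hom_pair_in X A R g h -> hom_pair_in X A R f h).

Definition is_equiv_rel_PRing (A : PRing) (R : PSubRing (prodPRing A)) : Prop :=
  forall X : PRing,
    (forall f : X -> A, is_pring_hom X A f -> hom_pair_in X A R f f) /\
    (forall f g : X -> A, is_pring_hom X A f -> is_pring_hom X A g ->
       hom_pair_in X A R f g -> hom_pair_in X A R g f) /\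
    (forall f g h : X -> A, is_pring_hom X A f -> is_pring_hom X A g -> is_pring_hom X A h ->
       hom_pair_in X A R f g -> hom_pair_in X A R g h -> hom_pair_in X A R f h).

Definition is_kernel_pair_of (A B : PMon) (f : A -> B) (R : PSubMon (prodPMon A)) : Prop :=
  (forall p : A * A, sp R p <-> f (fst p) = f (snd p)) /\
  (forall p q : A * A, sp R p -> sp R q ->
     (ss R p q <-> @psumm (prodPMon A) p q)).

Definition is_effective_PMon (A : PMon) (R : PSubMon (prodPMon A)) : Prop :=
  is_equiv_rel_PMon A R /\
  exists (B : PMon) (f : A -> B), is_pmon_hom A B f /\ is_kernel_pair_of A B f R.

Definition is_congruence (A : PRing) (R : PSubRing (prodPRing A)) : Prop :=
  is_equiv_rel_PRing A R /\
  exists (B : PRing) (f : A -> B), is_pring_hom A B f /\ is_kernel_pair_of A B f R.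

(* A congruence is in particular the kernel pair of a monoid homomorphism, and
   being a kernel pair forces the equivalence-relation condition in both
   categories. Conversely, let R be the kernel pair of a partial monoid
   homomorphism k : A -> B. As R is closed under products, k a = k a' implies
   k (a y) = k (a' y). Represent an element of A by the function
   y |-> k (a y); formal sums of such functions, compared via the possible
   values of their sums in B, form a partial ring (with total addition) into
   which A maps by a ring homomorphism whose kernel is exactly that of k. *)

From Stdlib Require Import List Permutation ProofIrrelevance
  FunctionalExtensionality PropExtensionality.
Import ListNotations.

Section SumsTo.
Variable B : PMon.

Lemma psumm0r (x : B) : psumm x pzero.
Proof. apply psumm_comm, pzero_summ. Qed.

Lemma padd0r (x : B) : padd x pzero = x.
Proof. rewrite (padd_comm _ _ _ (psumm0r x)). apply pzero_add. Qed.

Inductive sums_to : list B -> B -> Prop :=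
| sums_to_nil : sums_to [] pzero
| sums_to_cons x l s : sums_to l s -> psumm x s -> sums_to (x :: l) (padd x s).

Lemma sums_to_nilE s : sums_to [] s <-> s = pzero.
Proof. split; intros H; [now inversion H | subst; constructor]. Qed.

Lemma sums_to1 (x s : B) : sums_to [x] s <-> s = x.
Proof.
  split; intros H.
  - inversion H as [|x' l s' Hl Hs]; subst. inversion Hl; subst. apply padd0r.
  - subst. rewrite <- (padd0r x) at 2. constructor; [constructor | apply psumm0r].
Qed.

Lemma sums_to_cat l1 l2 s : sums_to (l1 ++ l2) s <->
  exists s1 s2, sums_to l1 s1 /\ sums_to l2 s2 /\ psumm s1 s2 /\ s = padd s1 s2.
Proof.
  revert s; induction l1 as [|x l1 IH]; intros s; simpl.
  - split.
    + intros H. exists pzero, s. rewrite pzero_add.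
      repeat split; [constructor | exact H | apply pzero_summ].
    + intros (s1 & s2 & H1 & H2 & _ & ->). apply sums_to_nilE in H1. subst.
      now rewrite pzero_add.
  - split.
    + intros H. inversion H as [|x' l' t Ht Hxt]; subst.
      destruct (proj1 (IH t) Ht) as (s1 & s2 & H1 & H2 & H12 & ->).
      destruct (proj2 (psumm_assoc B x s1 s2) (conj H12 Hxt)) as [Hx1 Hx12].
      exists (padd x s1), s2. rewrite (padd_assoc _ _ _ _ Hx1 Hx12).
      repeat split; [constructor | ..]; assumption.
    + intros (s1 & s2 & H1 & H2 & H12 & ->).
      inversion H1 as [|x' l' t Ht Hxt]; subst.
      destruct (proj1 (psumm_assoc B x t s2) (conj Hxt H12)) as [Ht2 Hxt2].
      rewrite (padd_assoc _ _ _ _ Hxt H12).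
      constructor; [apply IH; now exists t, s2 | exact Hxt2].
Qed.

Lemma sums_to_pair (x y s : B) : psumm x y -> sums_to [x; y] s <-> s = padd x y.
Proof.
  intros Hxy. change [x; y] with ([x] ++ [y]). rewrite sums_to_cat. split.
  - intros (s1 & s2 & H1 & H2 & _ & ->). apply sums_to1 in H1, H2. now subst.
  - intros ->. exists x, y. now rewrite !sums_to1.
Qed.

Lemma sums_to_perm l l' s : Permutation l l' -> sums_to l s -> sums_to l' s.
Proof.
  intros HP; revert s; induction HP as [| x l l' _ IH | x y l | l l' l'' _ IH1 _ IH2];
    intros s0 H; auto.
  - inversion H; subst. constructor; auto.
  - inversion H as [|y' l1 s1 Hl1 Hys1]; subst.
    inversion Hl1 as [|x' l2 t Ht Hxt]; subst.
    destruct (proj2 (psumm_assoc B y x t) (conj Hxt Hys1)) as [Hyx Hyxt].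
    assert (Hxy : psumm x y) by now apply psumm_comm.
    assert (Exy : padd x y = padd y x) by now apply padd_comm.
    assert (Hxyt : psumm (padd x y) t) by now rewrite Exy.
    destruct (proj1 (psumm_assoc B x y t) (conj Hxy Hxyt)) as [Hyt Hx_yt].
    assert (E : padd x (padd y t) = padd y (padd x t)).
    { rewrite <- (padd_assoc _ _ _ _ Hxy Hxyt), Exy. now apply padd_assoc. }
    rewrite <- E. repeat constructor; assumption.
Qed.

End SumsTo.
Arguments sums_to {B}.

Section ListMul.
Variable A : PRing.

Definition list_mul (l m : list A) : list A :=
  flat_map (fun b => map (fun a => pmul a b) l) m.

Lemma list_mul_cat_r l m n : list_mul l (m ++ n) = list_mul l m ++ list_mul l n.
Proof. apply flat_map_app. Qed.

Lemma list_mul_nil l : list_mul [] l = [].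
Proof. induction l; simpl; auto. Qed.

Lemma list_mul1 l : list_mul [pone] l = l.
Proof. induction l as [|a l IH]; simpl; auto. now rewrite pone_mul, IH. Qed.

Lemma perm_flat_map_swap {X Y : Type} (g : X -> X -> Y) (l m : list X) :
  Permutation (flat_map (fun b => map (fun a => g a b) l) m)
              (flat_map (fun a => map (fun b => g a b) m) l).
Proof.
  revert m; induction l as [|a l IH]; intros m; simpl.
  - induction m; simpl; auto.
  - eapply perm_trans; [|apply Permutation_app_head, IH].
    clear IH. induction m as [|b m IHm]; simpl; auto.
    apply Permutation_cons; auto.
    eapply perm_trans; [apply Permutation_app_head, IHm|].
    rewrite !app_assoc. apply Permutation_app_tail, Permutation_app_comm.
Qed.

Lemma list_mul_perm_comm l m : Permutation (list_mul l m) (list_mul m l).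
Proof.
  unfold list_mul.
  replace (flat_map (fun b => map (fun a => pmul a b) m) l)
    with (flat_map (fun a => map (fun b => pmul a b) m) l).
  - apply perm_flat_map_swap.
  - apply flat_map_ext; intros a; apply map_ext; intros b; apply pmul_comm.
Qed.

Lemma list_mul_assoc l m n : list_mul (list_mul l m) n = list_mul l (list_mul m n).
Proof.
  induction n as [|c n IH]; simpl; auto.
  rewrite list_mul_cat_r, <- IH. f_equal.
  unfold list_mul. rewrite !flat_map_concat_map, concat_map, !map_map.
  f_equal. apply map_ext; intros b. rewrite map_map.
  apply map_ext; intros a. apply pmul_assoc.
Qed.

End ListMul.

Section FormalSums.
Variables (A : PRing) (B : PMon) (k : A -> B).

(* A list l is read as the formal sum of the functions y |-> k (a y), a in l;
   [meaning l y] is the set of values its sum at y can take in B. *)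
Definition meaning (l : list A) (y : A) : B -> Prop :=
  sums_to (map (fun a => k (pmul a y)) l).

Lemma meaning1 a y t : meaning [a] y t <-> t = k (pmul a y).
Proof. apply sums_to1. Qed.

Lemma meaning_cat_compat l l' m m' :
  meaning l = meaning l' -> meaning m = meaning m' -> meaning (l ++ m) = meaning (l' ++ m').
Proof.
  intros El Em. extensionality y; extensionality t. apply propositional_extensionality.
  unfold meaning. rewrite !map_app, !sums_to_cat.
  change (sums_to (map (fun a => k (pmul a y)) ?n)) with (meaning n y).
  now rewrite El, Em.
Qed.

Lemma meaning_perm l l' : Permutation l l' -> meaning l = meaning l'.
Proof.
  intros HP. extensionality y; extensionality t. apply propositional_extensionality.
  split; apply sums_to_perm, Permutation_map; [|symmetry]; exact HP.
Qed.

Lemma meaning_map_mulr l b : meaning (map (fun a => pmul a b) l) = fun y => meaning l (pmul b y).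
Proof.
  extensionality y. unfold meaning. rewrite map_map. f_equal.
  apply map_ext; intros a. now rewrite pmul_assoc.
Qed.

Lemma meaning_list_mul_compat l l' m m' : meaning l = meaning l' -> meaning m = meaning m' ->
  meaning (list_mul A l m) = meaning (list_mul A l' m').
Proof.
  assert (Hl : forall l l' m, meaning l = meaning l' ->
            meaning (list_mul A l m) = meaning (list_mul A l' m)).
  { intros l0 l0' m0 E. induction m0 as [|b m0 IH]; simpl; auto.
    apply meaning_cat_compat; auto. now rewrite !meaning_map_mulr, E. }
  intros El Em. rewrite (Hl _ _ _ El).
  rewrite (meaning_perm _ _ (list_mul_perm_comm A l' m)),
          (meaning_perm _ _ (list_mul_perm_comm A l' m')).
  now apply Hl.
Qed.

Definition fsum : Type := {F : A -> B -> Prop | exists l, F = meaning l}.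

Definition fclass (l : list A) : fsum := exist _ (meaning l) (ex_intro _ l eq_refl).

Lemma fclass_eq l m : fclass l = fclass m <-> meaning l = meaning m.
Proof.
  split; intros E.
  - exact (f_equal (@proj1_sig _ _) E).
  - now apply subset_eq_compat.
Qed.

Lemma fclass_surj (q : fsum) : exists l, q = fclass l.
Proof. destruct q as [F [l ->]]. exists l. now apply subset_eq_compat. Qed.

Section Lift.
Variable op : list A -> list A -> list A.
Hypothesis op_compat : forall l l' m m',
  meaning l = meaning l' -> meaning m = meaning m' -> meaning (op l m) = meaning (op l' m').

Definition lifted (q r : fsum) : A -> B -> Prop :=
  fun y t => exists l m, proj1_sig q = meaning l /\ proj1_sig r = meaning m /\ meaning (op l m) y t.

Lemma lifted_class l m : lifted (fclass l) (fclass m) = meaning (op l m).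
Proof.
  extensionality y; extensionality t. apply propositional_extensionality. split.
  - intros (l' & m' & El & Em & H). now rewrite (op_compat l l' m m' El Em).
  - intros H. now exists l, m.
Qed.

Lemma lifted_closed q r : exists n, lifted q r = meaning n.
Proof.
  destruct (fclass_surj q) as [l ->], (fclass_surj r) as [m ->].
  exists (op l m). apply lifted_class.
Qed.

Definition lift2 (q r : fsum) : fsum := exist _ (lifted q r) (lifted_closed q r).

Lemma lift2_class l m : lift2 (fclass l) (fclass m) = fclass (op l m).
Proof. apply subset_eq_compat, lifted_class. Qed.

End Lift.

Definition fzero : fsum := fclass [].
Definition fone : fsum := fclass [pone].
Definition fsumm (q r : fsum) : Prop := True.
Definition fadd : fsum -> fsum -> fsum := lift2 (@app A) meaning_cat_compat.
Definition fmul : fsum -> fsum -> fsum := lift2 (list_mul A) meaning_list_mul_compat.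

Lemma fadd_class l m : fadd (fclass l) (fclass m) = fclass (l ++ m).
Proof. apply lift2_class. Qed.

Lemma fmul_class l m : fmul (fclass l) (fclass m) = fclass (list_mul A l m).
Proof. apply lift2_class. Qed.

Ltac by_classes :=
  intros;
  repeat match goal with q : fsum |- _ =>
    let l := fresh "l" in destruct (fclass_surj q) as [l ->] end;
  unfold fzero, fone; repeat (rewrite fadd_class || rewrite fmul_class).

Lemma fadd0 q : fadd fzero q = q.
Proof. by_classes. reflexivity. Qed.

Lemma faddC q r : fadd q r = fadd r q.
Proof. by_classes. apply fclass_eq, meaning_perm, Permutation_app_comm. Qed.

Lemma faddA q r s : fadd (fadd q r) s = fadd q (fadd r s).
Proof. by_classes. now rewrite app_assoc. Qed.

Lemma fmulC q r : fmul q r = fmul r q.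
Proof. by_classes. apply fclass_eq, meaning_perm, list_mul_perm_comm. Qed.

Lemma fmulA q r s : fmul (fmul q r) s = fmul q (fmul r s).
Proof. by_classes. now rewrite list_mul_assoc. Qed.

Lemma fmul1 q : fmul fone q = q.
Proof. by_classes. now rewrite list_mul1. Qed.

Lemma fmul0 q : fmul fzero q = fzero.
Proof. by_classes. now rewrite list_mul_nil. Qed.

Lemma fmulDl q r s : fmul (fadd q r) s = fadd (fmul q s) (fmul r s).
Proof.
  by_classes. apply fclass_eq.
  rewrite (meaning_perm _ _ (list_mul_perm_comm A _ _)), list_mul_cat_r.
  apply meaning_cat_compat; apply meaning_perm, list_mul_perm_comm.
Qed.

Definition formal_monoid : PMon :=
  {| car := fsum; pzero := fzero; psumm := fsumm; padd := fadd;
     pzero_summ := fun _ => I; pzero_add := fadd0;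
     psumm_comm := fun _ _ _ => I; padd_comm := fun q r _ => faddC q r;
     psumm_assoc := fun _ _ _ => iff_refl _;
     padd_assoc := fun q r s _ _ => faddA q r s |}.

Definition formal_ring : PRing :=
  {| pm := formal_monoid; pone := fone; pmul := fmul;
     pmul_comm := fmulC; pmul_assoc := fmulA; pone_mul := fmul1; pzero_mul := fmul0;
     psumm_mul := fun _ _ _ _ => I; pmul_addl := fun q r s _ => fmulDl q r s |}.

Definition embed (a : A) : formal_ring := fclass [a].

Lemma embed_pring_hom : is_pmon_hom A B k -> is_pring_hom A formal_ring embed.
Proof.
  intros [k0 kD].
  split; [split|split]; [| intros a b Hab; split | reflexivity | intros a b].
  - apply fclass_eq. extensionality y; extensionality t. apply propositional_extensionality.
    rewrite meaning1, pzero_mul, k0. symmetry. apply sums_to_nilE.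
  - exact I.
  - simpl. unfold embed. rewrite fadd_class. apply fclass_eq.
    extensionality y; extensionality t. apply propositional_extensionality.
    rewrite meaning1, (pmul_addl _ _ _ _ Hab).
    destruct (kD _ _ (psumm_mul A a b y Hab)) as [Hs ->].
    symmetry. now apply sums_to_pair.
  - simpl. unfold embed. now rewrite fmul_class.
Qed.

Lemma embed_eq :
  (forall a a' y, k a = k a' -> k (pmul a y) = k (pmul a' y)) ->
  forall a a', embed a = embed a' <-> k a = k a'.
Proof.
  intros kM a a'. unfold embed. rewrite fclass_eq. split.
  - intros E. assert (H : meaning [a] pone (k (pmul a pone))) by now apply meaning1.
    rewrite E, meaning1, !(pmul_comm A _ pone), !pone_mul in H. now symmetry.
  - intros E. extensionality y; extensionality t. apply propositional_extensionality.
    now rewrite !meaning1, (kM _ _ y E).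
Qed.

End FormalSums.

Section KernelPair.
Variables (A B : PMon) (k : A -> B) (R : PSubMon (prodPMon A)).
Hypothesis kerR : is_kernel_pair_of A B k R.

Lemma hom_pair_in_kernel_pair (X : PMon) (f g : X -> A) :
  is_pmon_hom X A f -> is_pmon_hom X A g ->
  hom_pair_in X A R f g <-> forall x, k (f x) = k (g x).
Proof.
  destruct kerR as [spR ssR]. intros [_ fD] [_ gD]. split.
  - intros [Hsp _] x. exact (proj1 (spR (f x, g x)) (Hsp x)).
  - intros E. assert (Hsp : forall x, sp R (f x, g x)) by (intros x; apply (spR (f x, g x)), E).
    split; [exact Hsp |].
    intros x y Hxy. apply ssR; [apply Hsp | apply Hsp |].
    split; [apply (fD _ _ Hxy) | apply (gD _ _ Hxy)].
Qed.

Lemma kernel_pair_equiv_rel_PMon : is_equiv_rel_PMon A R.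
Proof.
  intros X. split; [|split].
  - intros f Hf. now apply hom_pair_in_kernel_pair.
  - intros f g Hf Hg Hfg. apply hom_pair_in_kernel_pair; auto.
    intros x. symmetry. revert x. now apply hom_pair_in_kernel_pair.
  - intros f g h Hf Hg Hh Hfg Hgh. apply hom_pair_in_kernel_pair; auto.
    intros x. rewrite (proj1 (hom_pair_in_kernel_pair X f g Hf Hg) Hfg x).
    now apply hom_pair_in_kernel_pair.
Qed.

Lemma kernel_pair_of_same_kernel (C : PMon) (g : A -> C) :
  (forall a a', g a = g a' <-> k a = k a') -> is_kernel_pair_of A C g R.
Proof.
  intros E. split; [| apply kerR]. intros p. rewrite E. apply kerR.
Qed.

End KernelPair.

Lemma kernel_pair_equiv_rel_PRing (A : PRing) (B : PMon) (k : A -> B)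
  (R : PSubRing (prodPRing A)) :
  is_kernel_pair_of A B k R -> is_equiv_rel_PRing A R.
Proof.
  intros kerR X.
  destruct (kernel_pair_equiv_rel_PMon _ _ _ _ kerR X) as (Hrefl & Hsym & Htrans).
  split; [|split].
  - intros f [Hf _]. auto.
  - intros f g [Hf _] [Hg _]. auto.
  - intros f g h [Hf _] [Hg _] [Hh _]. eauto.
Qed.

Lemma kernel_pair_pmul_compat (A : PRing) (B : PMon) (k : A -> B)
  (R : PSubRing (prodPRing A)) :
  is_kernel_pair_of A B k R -> forall a a' y, k a = k a' -> k (pmul a y) = k (pmul a' y).
Proof.
  intros [spR _] a a' y E.
  apply (spR (pmul a y, pmul a' y)), (sp_mul _ R (a, a') (y, y)).
  - now apply (spR (a, a')).
  - now apply (spR (y, y)).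
Qed.

Theorem mainTheorem7 (A : PRing) (R : PSubRing (prodPRing A)) :
  is_congruence A R <-> is_effective_PMon (pm A) (psm R).
Proof.
  split.
  - intros [_ (B & f & [Hf _] & kerR)]. split.
    + exact (kernel_pair_equiv_rel_PMon _ _ _ _ kerR).
    + now exists (pm B), f.
  - intros [_ (B & k & Hk & kerR)]. split.
    + exact (kernel_pair_equiv_rel_PRing _ _ _ _ kerR).
    + exists (formal_ring A B k), (embed A B k). split.
      * now apply embed_pring_hom.
      * apply (kernel_pair_of_same_kernel _ _ _ _ kerR).
        apply embed_eq. exact (kernel_pair_pmul_compat _ _ _ _ kerR).
Qed.
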